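(* Let $n\ge 2$, fix $\boldsymbol{\rho}^0\in\mathcal{P}_n$ and $\alpha>0$, and let $\mathbf{R}^1,\mathbf{R}^2,\dots$ be independent rankings, each distributed as $\mathrm{Mallows}(\boldsymbol{\rho}^0,\alpha)$ with the footrule distance. Then as $N\to\infty$, $$\mathrm{rank}\Big(\tfrac{1}{N}\sum_{j=1}^{N}R^j_1,\dots,\tfrac{1}{N}\sum_{j=1}^{N}R^j_n\Big)\to \mathrm{rank}\big(\mathbb{E}[R_1\mid\boldsymbol{\rho}^0,\alpha],\dots,\mathbb{E}[R_n\mid\boldsymbol{\rho}^0,\alpha]\big)=\boldsymbol{\rho}^0,$$ where $\mathbf{R}=(R_1,\dots,R_n)\sim\mathrm{Mallows}(\boldsymbol{\rho}^0,\alpha)$.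
   Context: $\mathcal{P}_n$ denotes the set of permutations of $\{1,\dots,n\}$; a ranking $\mathbf{r}\in\mathcal{P}_n$ assigns rank $r_i$ to item $i$. The footrule distance is $d(\mathbf{r},\boldsymbol{\rho})=\sum_{i=1}^n|r_i-\rho_i|$. The Mallows distribution $\mathrm{Mallows}(\boldsymbol{\rho}^0,\alpha)$ on $\mathcal{P}_n$ has probability mass function $P(\mathbf{R}=\mathbf{r}\mid\boldsymbol{\rho}^0,\alpha)=\frac{1}{Z_n(\alpha)}\exp\{-\frac{\alpha}{n}d(\mathbf{r},\boldsymbol{\rho}^0)\}$ with normalizing constant $Z_n(\alpha)$. The rank operator on a real vector $(x_1,\dots,x_n)$ is $\mathrm{rank}(x_1,\dots,x_n)=(r_1,\dots,r_n)$ with $r_i=\sum_{j=1}^n\delta(x_i-x_j)$, where $\delta(x)=1$ if $x\ge 0$ and $\delta(x)=0$ if $x<0$. *)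

From HB Require Import structures.
From mathcomp Require Import all_boot all_order all_algebra all_fingroup.
From mathcomp Require Import all_classical all_reals all_analysis.
Set Implicit Arguments. Unset Strict Implicit. Unset Printing Implicit Defensive.
Import Order.TTheory GRing.Theory Num.Theory.
Local Open Scope ring_scope.
Local Open Scope classical_set_scope.

(* A ranking of n items is a permutation r : 'S_n; item i (0-based index)
   gets rank rk r i = (r i) + 1 in {1,...,n}. *)
Definition rk (n : nat) (r : 'S_n) (i : 'I_n) : nat := (r i).+1.

Definition footrule (n : nat) (r rho : 'S_n) : nat :=
  (\sum_(i < n) `|(rk r i)%:Z - (rk rho i)%:Z|%N)%N.

Section Mallows.
Variable R : realType.

Definition mallowsZ (n : nat) (rho0 : 'S_n) (alpha : R) : R :=
  \sum_(r : 'S_n) expR (- (alpha / n%:R) * (footrule r rho0)%:R).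

Definition mallows (n : nat) (rho0 : 'S_n) (alpha : R) (r : 'S_n) : R :=
  expR (- (alpha / n%:R) * (footrule r rho0)%:R) / mallowsZ rho0 alpha.

Definition mallows_mean (n : nat) (rho0 : 'S_n) (alpha : R) (i : 'I_n) : R :=
  \sum_(r : 'S_n) mallows rho0 alpha r * (rk r i)%:R.

Definition rankv (n : nat) (x : 'I_n -> R) (i : 'I_n) : nat :=
  (\sum_(j < n) nat_of_bool (0 <= x i - x j)%R)%N.

(* (1/N) sum_{j=1}^N R^j_i, where the sequence R^1, R^2, ... is indexed
   from 0: R^{j+1} = Rs j. *)
Definition avg_rank (n : nat) (T : Type) (Rs : nat -> T -> 'S_n)
  (N : nat) (w : T) (i : 'I_n) : R :=
  N%:R^-1 * \sum_(j < N) (rk (Rs j w) i)%:R.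
End Mallows.

(* Rs is a sequence of independent random rankings, each distributed as
   Mallows(rho0, alpha): every event {Rs j = r} is measurable, and for every
   finite set J of indices (a duplicate-free list) and every choice of
   rankings r_j, P(forall j in J, Rs j = r_j) = prod_{j in J} mallows(r_j). *)
Definition iid_mallows (R : realType) (d : measure_display)
  (T : measurableType d) (P : probability T R) (n : nat)
  (Rs : nat -> T -> 'S_n) (rho0 : 'S_n) (alpha : R) : Prop :=
  (forall (j : nat) (r : 'S_n), measurable [set w : T | Rs j w = r]) /\
  (forall (J : seq nat) (r : nat -> 'S_n), uniq J ->
     P [set w : T | forall j, j \in J -> Rs j w = r j] =
     ((\prod_(j <- J) mallows rho0 alpha (r j))%:E)%E).

From HB Require Import structures.
From mathcomp Require Import all_boot all_order all_algebra all_fingroup.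
From mathcomp Require Import all_classical all_reals all_analysis.
From mathcomp Require Import zify ring lra.
Set Implicit Arguments.
Unset Strict Implicit.
Unset Printing Implicit Defensive.
Import Order.TTheory GRing.Theory Num.Theory.
Local Open Scope ring_scope.
Local Open Scope classical_set_scope.

(* Let rho_i < rho_j. Pairing every ranking r with (i j) r, the one of the two
   that orders i and j as rho is at least as close to rho in footrule distance,
   hence at least as likely; the pair (rho, (i j) rho) is strictly unbalanced.
   So E[R_j - R_i] > 0: the expected ranks are ordered as rho and their rank
   vector is rho. The increments R^k_j - R^k_i are i.i.d. with positive mean,
   so by a Chernoff bound the probability that their first N terms have a
   nonpositive sum decays geometrically; by Borel-Cantelli, almost surely all
   the averaged ranks are eventually ordered as rho, and so is their rank
   vector. *)

Lemma expR_le_quadratic {R : realType} (u : R) :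
  u <= 1 / 2 -> expR u <= 1 + u + 2 * u ^+ 2.
Proof.
move=> u_le; have u_lt1 : 0 < 1 - u by lra.
have exp_le : expR u <= (1 - u)^-1.
  rewrite -[expR u]invrK -expRN lef_pV2 ?posrE ?expR_gt0 //.
  by have := expR_ge1Dx (- u); lra.
apply: le_trans exp_le _; rewrite -[_^-1]mul1r ler_pdivrMr //; nra.
Qed.

Lemma geometric_partial_sum_le (R : realFieldType) (q : R) (m : nat) :
  0 <= q < 1 -> \sum_(N < m) q ^+ N <= (1 - q)^-1.
Proof.
move=> /andP[q_ge0 q_lt1]; have q1_gt0 : 0 < 1 - q by lra.
have telescope : (1 - q) * \sum_(N < m) q ^+ N = 1 - q ^+ m.
  elim: m => [|m IH]; first by rewrite big_ord0 mulr0 expr0 subrr.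
  by rewrite big_ord_recr /= mulrDr IH exprS; ring.
rewrite -[_ <= _](ler_pM2l q1_gt0) telescope mulfV ?gt_eqF //.
by have := exprn_ge0 m q_ge0; lra.
Qed.

Lemma nneseries_expr_lt_pinfty (R : realType) (q : R) : 0 <= q < 1 ->
  (\sum_(N <oo) (q ^+ N)%:E < +oo)%E.
Proof.
move=> q01; have q_ge0 : 0 <= q by case/andP: q01.
apply: le_lt_trans (ltry (1 - q)^-1); apply: lime_le.
  by apply: is_cvg_nneseries => N _ _; rewrite lee_fin exprn_ge0.
by apply: nearW => m; rewrite sumEFin lee_fin big_mkord geometric_partial_sum_le.
Qed.

Lemma sum_ffun_prod (R : comSemiRingType) (I : finType) (N : nat) (g : I -> R) :
  \sum_(F : {ffun 'I_N -> I}) \prod_(k < N) g (F k) = (\sum_i g i) ^+ N.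
Proof.
by rewrite -[N in RHS]card_ord -prodr_const bigA_distr_bigA.
Qed.

Section finite_distribution.
Variables (R : realType) (I : finType) (p : I -> R).
Hypothesis p_ge0 : forall i, 0 <= p i.

Lemma chernoff_ffun_le (N : nat) (f : I -> R) (t : R) : 0 <= t ->
  \sum_(F : {ffun 'I_N -> I} | \sum_(k < N) f (F k) <= 0) \prod_(k < N) p (F k)
  <= (\sum_i p i * expR (- t * f i)) ^+ N.
Proof.
move=> t_ge0; rewrite -sum_ffun_prod big_mkcond /=; apply: ler_sum => F _.
rewrite big_split /= -expR_sum -mulr_sumr.
have p_prod_ge0 : 0 <= \prod_(k < N) p (F k) by apply: prodr_ge0.
case: ifP => [sum_le0|_]; last by rewrite mulr_ge0 ?expR_ge0.
rewrite ler_peMr // -expR0 ler_expR mulNr oppr_ge0.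
exact: mulr_ge0_le0.
Qed.

Hypothesis p_sum1 : \sum_i p i = 1.

Lemma exists_mgf_lt1 (f : I -> R) : 0 < \sum_i p i * f i ->
  exists2 t, 0 <= t & \sum_i p i * expR (- t * f i) < 1.
Proof.
set m := \sum_i p i * f i => m_gt0; pose K : R := \sum_i `|f i|.
have f_le i : `|f i| <= K.
  by rewrite /K (bigD1 i) //= lerDl sumr_ge0.
have m_le : m <= K.
  rewrite -[K]mul1r -p_sum1 mulr_suml; apply: ler_sum => i _.
  by rewrite ler_wpM2l // (le_trans (ler_norm _)).
have K_gt0 : 0 < K by apply: lt_le_trans m_le.
(* with [t := m / 4K^2], the bound [exp(-t f) <= 1 - t f + 2 t^2 K^2]
   has mean [1 - t m / 2] *)
pose t := m / (4 * K ^+ 2).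
have t_gt0 : 0 < t by rewrite divr_gt0 // mulr_gt0 // exprn_gt0.
have tK2 : t * (4 * K ^+ 2) = m by rewrite divfK // mulf_neq0 // expf_neq0 // gt_eqF.
exists t; first exact: ltW.
have term_le i : expR (- t * f i) <= 1 - t * f i + 2 * t ^+ 2 * K ^+ 2.
  have /andP[fK Kf] : - K <= f i <= K by rewrite -ler_norml.
  have tf_le : - t * f i <= 1 / 2 by nra.
  have f2_le : 0 <= t ^+ 2 * (K ^+ 2 - f i ^+ 2).
    by rewrite mulr_ge0 ?sqr_ge0 // subr_ge0; nra.
  by apply: le_trans (expR_le_quadratic tf_le) _; nra.
apply: le_lt_trans (ler_sum _ (fun i _ => ler_wpM2l (p_ge0 i) (term_le i))) _.
rewrite (eq_bigr (fun i => p i * (1 + 2 * t ^+ 2 * K ^+ 2) - t * (p i * f i)));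
  last by move=> i _; ring.
rewrite sumrB -mulr_suml p_sum1 -mulr_sumr -/m; nra.
Qed.

End finite_distribution.

Section measure_lemmas.
Context d (T : measurableType d) (R : realType) (mu : {measure set T -> \bar R}).
Local Open Scope ereal_scope.

Lemma measure_bigsetU_le (I : Type) (s : seq I) (Q : pred I) (A : I -> set T) :
  (forall i, Q i -> measurable (A i)) ->
  mu (\big[setU/set0]_(i <- s | Q i) A i) <= \sum_(i <- s | Q i) mu (A i).
Proof.
move=> mA; elim: s => [|i s IH]; first by rewrite !big_nil measure0.
rewrite !big_cons; case: ifP => // Qi.
apply: le_trans (measureU2 _ _ _) _; first exact: mA.
  by apply: bigsetU_measurable => j Qj; exact: mA.
exact: leeD2l.
Qed.

Lemma ae_eventually_notin (F : (set T)^nat) : (forall N, measurable (F N)) ->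
  \sum_(N <oo) mu (F N) < +oo -> {ae mu, forall w, \forall N \near \oo, ~ F N w}.
Proof.
move=> mF sum_fin; exists (lim_sup_set F); split.
- by apply: bigcap_measurable => // M _; exact: bigcup_measurable.
- exact: lim_sup_set_cvg0.
move=> w /= not_ev M _; apply: contrapT => not_F; apply: not_ev.
by exists M => // N /= MN FNw; apply: not_F; exists N.
Qed.

End measure_lemmas.

Section iid_sequence.
Context (R : realType) d (T : measurableType d) (P : probability T R).
Variables (I : finType) (X : nat -> T -> I) (p : I -> R).
Hypotheses (p_ge0 : forall i, 0 <= p i) (p_sum1 : \sum_i p i = 1).
Hypothesis X_measurable : forall j i, measurable [set w | X j w = i].
Hypothesis P_X : forall (J : seq nat) (x : nat -> I), uniq J ->
  P [set w | forall j, j \in J -> X j w = x j] = (\prod_(j <- J) p (x j))%:E.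

Definition sample (N : nat) (w : T) : {ffun 'I_N -> I} := [ffun k : 'I_N => X k w].

Lemma measurable_sample_eq N F : measurable [set w | sample N w = F].
Proof.
have -> : [set w | sample N w = F] = \bigcap_(k in [set: 'I_N]) [set w | X k w = F k].
  apply/seteqP; split => w /=.
    by move=> <- k _; rewrite ffunE.
  by move=> XF; apply/ffunP => k; rewrite ffunE; exact: XF.
by apply: fin_bigcap_measurable => // k _; exact: X_measurable.
Qed.

Lemma P_sample_eq N F : P [set w | sample N w = F] = (\prod_(k < N) p (F k))%:E.
Proof.
case: (posnP N) F => [-> | N_gt0] F.
  rewrite big_ord0 -(probability_setT P); congr (P _); apply/seteqP; split => //= w _.
  by apply/ffunP => -[].
pose x j := if insub j is Some k then F k else F (Ordinal N_gt0).
have -> : [set w | sample N w = F] = [set w | forall j, j \in iota 0 N -> X j w = x j].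
  apply/seteqP; split => w /=.
    move=> sF j; rewrite mem_iota /= => jN.
    by rewrite /x insubT -sF ffunE.
  move=> Xx; apply/ffunP => k; rewrite ffunE.
  by rewrite Xx ?mem_iota ?ltn_ord // /x valK.
rewrite P_X ?iota_uniq // -[in iota 0 N](subn0 N) big_mkord.
by congr (_%:E); apply: eq_bigr => k _; rewrite /x valK.
Qed.

Lemma sample_preimageE N (B : pred {ffun 'I_N -> I}) :
  [set w | B (sample N w)] = \big[setU/set0]_(F | B F) [set w | sample N w = F].
Proof.
rewrite -bigcup_seq_cond; apply/seteqP; split => w /=.
  by move=> Bw; exists (sample N w) => //=; rewrite mem_index_enum Bw.
by move=> [F /andP[_ BF] ->].
Qed.

Lemma measurable_sample_preimage N (B : pred {ffun 'I_N -> I}) :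
  measurable [set w | B (sample N w)].
Proof.
by rewrite sample_preimageE; apply: bigsetU_measurable => F _; exact: measurable_sample_eq.
Qed.

Lemma P_sample_preimage_le N (B : pred {ffun 'I_N -> I}) :
  (P [set w | B (sample N w)] <= (\sum_(F | B F) \prod_(k < N) p (F k))%:E)%E.
Proof.
rewrite sample_preimageE -sumEFin.
under [X in (_ <= X)%E]eq_bigr do rewrite -P_sample_eq.
by apply: measure_bigsetU_le => F _; exact: measurable_sample_eq.
Qed.

Lemma sum_le0_sampleE N (f : I -> R) :
  [set w | \sum_(k < N) f (X k w) <= 0] =
  [set w | sample N w \in [pred F : {ffun 'I_N -> I} | \sum_(k < N) f (F k) <= 0]].
Proof.
have sumE w : \sum_(k < N) f (sample N w k) = \sum_(k < N) f (X k w).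
  by apply: eq_bigr => k _; rewrite ffunE.
by apply/seteqP; split => w; rewrite /= inE sumE.
Qed.

Lemma measurable_sum_le0 N (f : I -> R) :
  measurable [set w | \sum_(k < N) f (X k w) <= 0].
Proof. by rewrite sum_le0_sampleE; exact: measurable_sample_preimage. Qed.

Lemma P_sum_le0_chernoff N (f : I -> R) (t : R) : 0 <= t ->
  (P [set w | (\sum_(k < N) f (X k w) <= 0)%R] <=
   ((\sum_i p i * expR (- t * f i)) ^+ N)%:E)%E.
Proof.
move=> t_ge0; rewrite sum_le0_sampleE.
by apply: le_trans (P_sample_preimage_le _) _; rewrite lee_fin chernoff_ffun_le.
Qed.

Lemma ae_eventually_sum_gt0 (J : finType) (Q : pred J) (f : J -> I -> R) :
  (forall j, Q j -> 0 < \sum_i p i * f j i) ->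
  {ae P, forall w, \forall N \near \oo,
     forall j, Q j -> 0 < \sum_(k < N) f j (X k w)}.
Proof.
move=> mean_gt0.
have /choice[t t_spec] : forall j, exists tj : R, 0 <= tj /\
    (Q j -> \sum_i p i * expR (- tj * f j i) < 1).
  move=> j; have [Qj|nQj] := boolP (Q j).
    by have [tj ? ?] := exists_mgf_lt1 p_ge0 p_sum1 (mean_gt0 j Qj); exists tj.
  by exists 0; split => // /negP.
pose q j := \sum_i p i * expR (- t j * f j i).
have q_ge0 j : 0 <= q j by apply: sumr_ge0 => i _; rewrite mulr_ge0 ?expR_ge0.
pose bad N := \big[setU/set0]_(j | Q j) [set w | (\sum_(k < N) f j (X k w) <= 0)%R].
have mbad N : measurable (bad N).
  by apply: bigsetU_measurable => j _; exact: measurable_sum_le0.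
have P_bad N : (P (bad N) <= \sum_(j | Q j) (q j ^+ N)%:E)%E.
  apply: le_trans (measure_bigsetU_le P _ _) _.
    by move=> j _; exact: measurable_sum_le0.
  by apply: lee_sum => j _; apply: P_sum_le0_chernoff; case: (t_spec j).
have sum_P_bad : (\sum_(N <oo) P (bad N) < +oo)%E.
  apply: le_lt_trans (lee_nneseries (fun N _ _ => measure_ge0 _ _)
    (fun N _ => P_bad N)) _.
  rewrite nneseries_sum; last by move=> j N _; rewrite lee_fin exprn_ge0.
  apply: lte_sum_pinfty => j Qj; apply: nneseries_expr_lt_pinfty.
  by rewrite q_ge0; case: (t_spec j) => _ /(_ Qj).
apply: filterS (ae_eventually_notin mbad sum_P_bad) => w.
apply: filterS => N not_bad j Qj; rewrite ltNge; apply/negP => sum_le0.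
by apply: not_bad; rewrite /bad -bigcup_seq_cond; exists j => //=; rewrite mem_index_enum.
Qed.

End iid_sequence.

Section footrule.
Variables (n : nat) (rho : 'S_n).

Lemma footrule_eq0 (r : 'S_n) : (footrule r rho == 0)%N = (r == rho).
Proof.
rewrite sum_nat_eq0; apply/forallP/eqP => [r_rho|-> i]; last by rewrite subrr.
apply/permP => i; apply/val_inj; have := r_rho i.
by rewrite absz_eq0 subr_eq0 eqz_nat eqSS => /eqP.
Qed.

Lemma footrule_le_tperm (r : 'S_n) (i j : 'I_n) : (rho i < rho j)%N ->
  (r i < r j)%N -> (footrule r rho <= footrule (tperm i j * r) rho)%N.
Proof.
move=> rho_ij r_ij.
have i_neq_j : i != j by apply: contraTneq rho_ij => ->; rewrite ltnn.
pose dist s k := `|(rk s k)%:Z - (rk rho k)%:Z|%N.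
have split s : footrule s rho =
    (dist s i + dist s j + \sum_(k | (k != i) && (k != j)) dist s k)%N.
  by rewrite /footrule (bigD1 i) // (bigD1 j) 1?eq_sym //= addnA.
have rest_eq : (\sum_(k | (k != i) && (k != j)) dist r k =
    \sum_(k | (k != i) && (k != j)) dist (tperm i j * r)%g k)%N.
  by apply: eq_bigr => k /andP[ki kj]; rewrite /dist /rk permM tpermD // eq_sym.
rewrite !split rest_eq leq_add2r /dist /rk !permM tpermL tpermR.
(* for [a < b] and [c < e]: [|a - c| + |b - e| <= |b - c| + |a - e|] *)
move: (r i) (r j) (rho i) (rho j) r_ij rho_ij => a b c e /= *; lia.
Qed.

End footrule.

Lemma sum_leq_ord (m n : nat) : (m < n)%N ->
  (\sum_(k < n) nat_of_bool (k <= m)%N)%N = m.+1.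
Proof.
move=> m_lt_n; rewrite -(big_mkord xpredT (fun k => nat_of_bool (k <= m)%N)).
rewrite (big_cat_nat (n := m.+1)) //= [X in (_ + X)%N]big1_seq ?addn0; last first.
  by move=> k; rewrite mem_index_iota => /andP[_ /andP[m_lt_k _]]; rewrite leqNgt m_lt_k.
rewrite (eq_big_nat _ _ (F2 := fun => 1%N)) ?sum_nat_const_nat ?muln1 ?subn0 //.
by move=> k /andP[_ k_le]; rewrite -ltnS k_le.
Qed.

Lemma rankv_rk (R : realType) (n : nat) (rho : 'S_n) (x : 'I_n -> R) :
  (forall i j, (rho i < rho j)%N -> x i < x j) -> forall i, rankv x i = rk rho i.
Proof.
move=> x_incr i; rewrite /rankv.
rewrite (eq_bigr (fun j => nat_of_bool (rho j <= rho i)%N)); last first.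
  move=> j _; rewrite subr_ge0; congr nat_of_bool.
  case: (ltngtP (rho j) (rho i)) => rho_ji.
  - by rewrite ltW // x_incr.
  - by apply/negbTE; rewrite -ltNge x_incr.
  - by rewrite (perm_inj (val_inj rho_ji)) lexx.
rewrite (reindex_inj (@perm_inj _ rho^-1)) /=.
under eq_bigr do rewrite permKV.
by rewrite sum_leq_ord.
Qed.

Section mallows_model.
Variables (R : realType) (n : nat) (rho0 : 'S_n) (alpha : R).

Lemma mallowsZ_gt0 : 0 < mallowsZ rho0 alpha.
Proof.
rewrite /mallowsZ (bigD1 1%g) //= ltr_pwDl ?expR_gt0 //.
by apply: sumr_ge0 => r _; exact: expR_ge0.
Qed.

Lemma mallows_gt0 r : 0 < mallows rho0 alpha r.
Proof. by rewrite divr_gt0 ?expR_gt0 ?mallowsZ_gt0. Qed.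

Lemma mallows_sum1 : \sum_r mallows rho0 alpha r = 1.
Proof. by rewrite -mulr_suml mulfV // gt_eqF // mallowsZ_gt0. Qed.

Hypotheses (n_gt0 : (0 < n)%N) (alpha_gt0 : 0 < alpha).

Let rate_gt0 : 0 < alpha / n%:R.
Proof. by rewrite divr_gt0 // ltr0n. Qed.

Lemma ler_mallows r s :
  (mallows rho0 alpha s <= mallows rho0 alpha r) = (footrule r rho0 <= footrule s rho0)%N.
Proof.
rewrite /mallows ler_pM2r ?invr_gt0 ?mallowsZ_gt0 // ler_expR.
by rewrite !mulNr lerN2 ler_pM2l // ler_nat.
Qed.

Lemma ltr_mallows r s :
  (mallows rho0 alpha s < mallows rho0 alpha r) = (footrule r rho0 < footrule s rho0)%N.
Proof. by rewrite ltNge ler_mallows ltnNge. Qed.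

Lemma mallows_tperm_ge0 (i j : 'I_n) r : (rho0 i < rho0 j)%N ->
  0 <= (mallows rho0 alpha r - mallows rho0 alpha (tperm i j * r)) *
       ((rk r j)%:R - (rk r i)%:R).
Proof.
move=> rho_ij; rewrite /rk; case: (ltngtP (r i) (r j)) => r_ij.
- apply: mulr_ge0; rewrite subr_ge0; last by rewrite ler_nat ltnS ltnW.
  by rewrite ler_mallows footrule_le_tperm.
- apply: mulr_le0; rewrite subr_le0; last by rewrite ler_nat ltnS ltnW.
  rewrite ler_mallows.
  have := @footrule_le_tperm _ rho0 (tperm i j * r) i j rho_ij.
  by rewrite !permM tpermL tpermR mulgA tperm2 mul1g; apply.
- by rewrite r_ij subrr mulr0.
Qed.

Lemma mallows_expect_sub_gt0 (i j : 'I_n) : (rho0 i < rho0 j)%N ->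
  0 < \sum_r mallows rho0 alpha r * ((rk r j)%:R - (rk r i)%:R).
Proof.
(* pairing [r] with [tperm i j * r] writes [2 D] as a sum of nonnegative
   terms, the one at [rho0] being positive *)
move=> rho_ij; set D := \sum_r _.
have i_neq_j : i != j by apply: contraTneq rho_ij => ->; rewrite ltnn.
pose s := tperm i j.
have D_swap : D = \sum_r mallows rho0 alpha (s * r) * ((rk r i)%:R - (rk r j)%:R).
  rewrite /D (reindex_inj (mulgI s)) /=; apply: eq_bigr => r _.
  by rewrite /rk !permM tpermL tpermR.
have D2 : D + D = \sum_r (mallows rho0 alpha r - mallows rho0 alpha (s * r)) *
                         ((rk r j)%:R - (rk r i)%:R).
  by rewrite {2}D_swap /D -big_split /=; apply: eq_bigr => r _; ring.
suff : 0 < D + D by lra.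
rewrite D2 (bigD1 rho0) //= ltr_pwDl ?sumr_ge0 // => [|r _]; last first.
  exact: mallows_tperm_ge0.
rewrite mulr_gt0 // subr_gt0 ?ltr_nat ?ltnS // ltr_mallows.
have /eqP -> : (footrule rho0 rho0 == 0)%N by rewrite footrule_eq0.
rewrite lt0n footrule_eq0.
by apply: contra_neq i_neq_j => /permP/(_ i); rewrite permM tpermL => /perm_inj ->.
Qed.

Lemma mallows_mean_lt (i j : 'I_n) : (rho0 i < rho0 j)%N ->
  mallows_mean rho0 alpha i < mallows_mean rho0 alpha j.
Proof.
move=> rho_ij; rewrite -subr_gt0 /mallows_mean -sumrB.
under eq_bigr do rewrite -mulrBr.
exact: mallows_expect_sub_gt0.
Qed.

End mallows_model.

Theorem theorem2 (R : realType) (d : measure_display) (T : measurableType d)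
  (P : probability T R) (n : nat) (rho0 : 'S_n) (alpha : R)
  (Rs : nat -> T -> 'S_n) :
  (2 <= n)%N -> 0 < alpha -> iid_mallows P Rs rho0 alpha ->
  (forall i : 'I_n, rankv (mallows_mean rho0 alpha) i = rk rho0 i) /\
  {ae P, forall w : T, \forall N \near \oo,
     forall i : 'I_n, rankv (avg_rank R Rs N w) i = rankv (mallows_mean rho0 alpha) i}.
Proof.
move=> n_ge2 alpha_gt0 [Rs_measurable P_Rs].
have n_gt0 : (0 < n)%N by apply: leq_trans n_ge2.
have rank_mean := rankv_rk (mallows_mean_lt (rho0 := rho0) n_gt0 alpha_gt0).
split=> //.
have mallows_ge0 r : 0 <= mallows rho0 alpha r by exact/ltW/mallows_gt0.
have := ae_eventually_sum_gt0 mallows_ge0 (mallows_sum1 rho0 alpha) Rs_measurable P_Rs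
  (Q := fun ij : 'I_n * 'I_n => (rho0 ij.1 < rho0 ij.2)%N)
  (f := fun ij r => (rk r ij.2)%:R - (rk r ij.1)%:R)
  (fun ij => mallows_expect_sub_gt0 n_gt0 alpha_gt0 (i := ij.1) (j := ij.2)).
apply: filterS => w; apply: filterS2 (nbhs_infty_gt 0) => N N_gt0 gaps_gt0 i.
rewrite rank_mean; move: i; apply: rankv_rk => i j rho_ij.
rewrite -subr_gt0 /avg_rank -mulrBr -sumrB mulr_gt0 ?invr_gt0 ?ltr0n //.
exact: (gaps_gt0 (i, j)).
Qed.
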